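(* Let $k\ge1$ and let $\lambda_{opt}=\min_{C}\max_{1\le i\le n}\min_{c\in C}\mathsf{E}\mathrm{d}(c,P_i)$, the minimum taken over all sets $C$ of $k$ points of $T$. Then either $\lambda_{opt}=\mathsf{E}\mathrm{d}(p_i^*,P_i)$ for some $i$, or there exist indices $i,j$ and a point $c_{ij}$ on the path $\pi(p_i^*,p_j^* )$ with $\mathsf{E}\mathrm{d}(c_{ij},P_i)=\mathsf{E}\mathrm{d}(c_{ij},P_j)$ such that $\lambda_{opt}=\mathsf{E}\mathrm{d}(c_{ij},P_i)=\mathsf{E}\mathrm{d}(c_{ij},P_j)$.
   Context: $T$ is a tree with positive edge lengths, edges regarded as segments; $\pi(p,q)$ is the simple path between points $p,q$ and $d$ the path-length distance. Uncertain point $P_i$ ($1\le i\le n$) has weight $w_i\ge0$, locations $p_{ij}$ and probabilities $f_{ij}\ge0$ summing to $1$; $\mathsf{E}\mathrm{d}(x,P_i)=w_i\sum_j f_{ij}d(x,p_{ij})$. $p_i^*$ is a vertex of $T$ minimizing $\mathsf{E}\mathrm{d}(\cdot,P_i)$ over $T$ (the median of $P_i$). As $x$ moves along $\pi(p_i^*,p_j^* )$ from $p_i^*$ to $p_j^*$, $\mathsf{E}\mathrm{d}(x,P_i)$ is nondecreasing and $\mathsf{E}\mathrm{d}(x,P_j)$ is nonincreasing. *)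

From HB Require Import structures.
From mathcomp Require Import all_boot all_order all_algebra.
Set Implicit Arguments. Unset Strict Implicit. Unset Printing Implicit Defensive.
Import Order.TTheory GRing.Theory Num.Theory.
Local Open Scope ring_scope.

Section TreeDefs.
Variable R : realFieldType.
Variable V : finType.

Definition pathlen (len : V -> V -> R) (u : V) (p : seq V) : R :=
  \sum_(e <- pairmap len u p) e.

Definition simple_path (adj : rel V) (u v : V) (p : seq V) : bool :=
  [&& path adj u p, last u p == v & uniq (u :: p)].

Definition is_wtree (adj : rel V) (len : V -> V -> R) : Prop :=
  [/\ (forall u v, adj u v = adj v u),
      (forall u, ~~ adj u u),
      (forall u v, len u v = len v u),
      (forall u v, adj u v -> 0 < len u v)
    & (forall u v, exists p, simple_path adj u v p) /\
      (forall u v p q, simple_path adj u v p -> simple_path adj u v q -> p = q)].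

Definition is_vdist (adj : rel V) (len : V -> V -> R) (dV : V -> V -> R) : Prop :=
  forall u v p, simple_path adj u v p -> dV u v = pathlen len u p.

(* Pt a b s represents the point at distance s from a on the edge ab;
   Pt a a 0 represents the vertex a. *)
Record point := Pt { pa : V; pb : V; ps : R }.

Definition vpt (v : V) : point := Pt v v 0.

Definition elen (len : V -> V -> R) (a b : V) : R :=
  if a == b then 0 else len a b.

Definition valid_pt (adj : rel V) (len : V -> V -> R) (x : point) : Prop :=
  (adj (pa x) (pb x) /\ 0 <= ps x <= len (pa x) (pb x)) \/
  (pa x = pb x /\ ps x = 0).

Definition tdist (len : V -> V -> R) (dV : V -> V -> R) (x y : point) : R :=
  let: Pt a b s := x in let: Pt c e t := y in
  let L1 := elen len a b in let L2 := elen len c e in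
  if (a == c) && (b == e) then `|s - t|
  else if (a == e) && (b == c) then `|s - (L2 - t)|
  else Num.min (Num.min (s + dV a c + t) (s + dV a e + (L2 - t)))
               (Num.min ((L1 - s) + dV b c + t) ((L1 - s) + dV b e + (L2 - t))).

Definition on_path (len : V -> V -> R) (dV : V -> V -> R) (p q x : point) : Prop :=
  tdist len dV p x + tdist len dV x q = tdist len dV p q.

Definition Ed (len : V -> V -> R) (dV : V -> V -> R) (n : nat) (m : 'I_n -> nat)
  (w : 'I_n -> R) (f : forall i, 'I_(m i) -> R) (loc : forall i, 'I_(m i) -> point)
  (x : point) (i : 'I_n) : R :=
  w i * \sum_(j < m i) f i j * tdist len dV x (loc i j).

Definition kcost (len : V -> V -> R) (dV : V -> V -> R) (n : nat) (hn : (0 < n)%N)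
  (m : 'I_n -> nat) (w : 'I_n -> R) (f : forall i, 'I_(m i) -> R)
  (loc : forall i, 'I_(m i) -> point) (k : nat) (hk : (0 < k)%N)
  (C : 'I_k -> point) : R :=
  let E := Ed len dV w f loc in
  let g := fun i => \big[Num.min/E (C (Ordinal hk)) i]_(j < k) E (C j) i in
  \big[Num.max/g (Ordinal hn)]_(i < n) g i.

End TreeDefs.

From HB Require Import structures.
From mathcomp Require Import all_boot all_order all_algebra.
From mathcomp Require Import ring lra.
From Stdlib Require Import Classical.
Set Implicit Arguments. Unset Strict Implicit. Unset Printing Implicit Defensive.
Import Order.TTheory GRing.Theory Num.Theory.
Local Open Scope ring_scope.

(* Take an optimal family of centers and suppose [lam] is neither the value
   [Ed(p_i^*, P_i)] of a median nor a balanced value on a path between two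
   medians.  Then every center [c] can be moved slightly so that all its tight
   uncertain points (those with [Ed(c, P_i) = lam]) become strictly cheaper:
   step towards the median of one tight point.  As [c] is not on the path
   between the medians of two tight points, a short step towards one of them
   is also a step towards the other, and [Ed(., P_i)] is convex along paths
   with its minimum below [lam].  Short steps keep the other points below
   [lam], so the cost of the new centers drops below [lam], a contradiction.
   The geometry of the tree enters only through the four-point condition of
   its path metric, which lifts from vertices to all points of the edges. *)

Definition four_point (R : realFieldType) (T : Type) (d : T -> T -> R) x y z w :=
  d x y + d z w <= d x z + d y w \/ d x y + d z w <= d x w + d y z.

Section VertexMetric.
Variables (R : realFieldType) (V : finType) (adj : rel V) (len : V -> V -> R)
  (dV : V -> V -> R).
Hypothesis Htree : is_wtree adj len.
Hypothesis HdV : is_vdist adj len dV.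

Local Notation sp := (simple_path adj).
Local Notation plen := (pathlen len).

Lemma adj_sym u v : adj u v = adj v u.
Proof. by case: Htree. Qed.

Lemma adj_irr u : ~~ adj u u.
Proof. by case: Htree. Qed.

Lemma adj_neq u v : adj u v -> u != v.
Proof. by apply: contraTneq => ->; apply: adj_irr. Qed.

Lemma len_sym u v : len u v = len v u.
Proof. by case: Htree. Qed.

Lemma len_gt0 u v : adj u v -> 0 < len u v.
Proof. by case: Htree => _ _ _ H _; apply: H. Qed.

Lemma simple_path_exists u v : exists p, sp u v p.
Proof. by case: Htree => _ _ _ _ [H _]; apply: H. Qed.

Lemma pathlen_nil u : plen u [::] = 0.
Proof. by rewrite /pathlen big_nil. Qed.

Lemma pathlen_cons u v p : plen u (v :: p) = len u v + plen v p.
Proof. by rewrite /pathlen /= big_cons. Qed.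

Lemma pathlen_cat u p q : plen u (p ++ q) = plen u p + plen (last u p) q.
Proof.
elim: p u => [|x p IH] u /=; first by rewrite pathlen_nil add0r.
by rewrite !pathlen_cons IH addrA.
Qed.

Lemma pathlen_rcons u p v : plen u (rcons p v) = plen u p + len (last u p) v.
Proof. by rewrite -cats1 pathlen_cat pathlen_cons pathlen_nil addr0. Qed.

Lemma last_rev_belast (x : V) p : last (last x p) (rev (belast x p)) = x.
Proof.
by rewrite (_ : last _ _ = last x (last x p :: rev (belast x p))) //
  -rev_rcons -lastI rev_cons last_rcons.
Qed.

Lemma pathlen_rev x p : plen (last x p) (rev (belast x p)) = plen x p.
Proof.
elim: p x => [|y p IH] x //=.
by rewrite rev_cons pathlen_rcons IH pathlen_cons last_rev_belast len_sym addrC.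
Qed.

Lemma pathlen_ge0 u p : path adj u p -> 0 <= plen u p.
Proof.
elim: p u => [|x p IH] u /=; first by rewrite pathlen_nil.
by case/andP => H1 H2; rewrite pathlen_cons addr_ge0 ?IH // ltW ?len_gt0.
Qed.

Lemma simple_path_rev u v p : sp u v p -> sp v u (rev (belast u p)).
Proof.
case/and3P => Hp /eqP Hl Hu; apply/and3P; split.
- by rewrite -Hl rev_path; apply: sub_path Hp => a b; rewrite adj_sym.
- by rewrite -Hl last_rev_belast.
- by rewrite -Hl -rev_rcons -lastI rev_uniq.
Qed.

Lemma simple_path_cons u v x p : sp u v (x :: p) -> adj u x /\ sp x v p.
Proof. by case/and3P => /= /andP [H1 H2] Hl /andP [_ U]; split; last apply/and3P. Qed.

Lemma simple_path_rcons u p x :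
  sp u (last u p) p -> adj (last u p) x -> x \notin u :: p -> sp u x (rcons p x).
Proof.
case/and3P => Hp _ U Ha Hx; apply/and3P; split.
- by rewrite rcons_path Hp Ha.
- by rewrite last_rcons.
- by rewrite -rcons_cons rcons_uniq Hx U.
Qed.

Lemma simple_path_split u v p z : sp u v p -> z \in u :: p ->
  exists p1 p2, [/\ sp u z p1, sp z v p2 & plen u p = plen u p1 + plen z p2].
Proof.
move=> Hp Hz; case/splitPl: Hz Hp => p1 p2 <- Hp; exists p1, p2.
case/and3P: Hp; rewrite cat_path last_cat -cat_cons cat_uniq.
move=> /andP [H1 H2] Hl /and3P [U1 D U2]; split.
- by apply/and3P.
- apply/and3P; split => //=; rewrite U2 andbT.
  by apply: contra D => Hin; apply/hasP; exists (last u p1) => //; apply: mem_last.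
- by rewrite pathlen_cat.
Qed.

Lemma dV_sym u v : dV u v = dV v u.
Proof.
have [p Hp] := simple_path_exists u v.
rewrite (HdV Hp) (HdV (simple_path_rev Hp)).
by case/and3P: Hp => _ /eqP <- _; rewrite pathlen_rev.
Qed.

Lemma dV_xx u : dV u u = 0.
Proof.
by rewrite (@HdV u u [::]) ?pathlen_nil // /simple_path /= eqxx.
Qed.

Lemma dV_edge u v : adj u v -> dV u v = len u v.
Proof.
move=> H; rewrite (@HdV u v [:: v]) ?pathlen_cons ?pathlen_nil ?addr0 //.
by rewrite /simple_path /= H eqxx /= inE andbT; apply: adj_neq.
Qed.

Lemma dV_cons u v x p : sp u v (x :: p) -> dV u v = len u x + dV x v.
Proof. by move=> Hp; rewrite (HdV Hp) (HdV (simple_path_cons Hp).2) pathlen_cons. Qed.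

Lemma dV_ge0 u v : 0 <= dV u v.
Proof.
have [p Hp] := simple_path_exists u v.
by rewrite (HdV Hp); case/and3P: Hp => H _ _; apply: pathlen_ge0.
Qed.

Lemma dV_eq0 u v : dV u v = 0 -> u = v.
Proof.
have [[|x p] Hp] := simple_path_exists u v; first by case/and3P: Hp => _ /eqP.
rewrite (dV_cons Hp) => E; exfalso.
have [/len_gt0 + _] := simple_path_cons Hp; have := dV_ge0 x v; lra.
Qed.

Lemma dV_split u v p z : sp u v p -> z \in u :: p -> dV u v = dV u z + dV z v.
Proof.
move=> Hp Hz; have [p1 [p2 [H1 H2 E]]] := simple_path_split Hp Hz.
by rewrite (HdV Hp) (HdV H1) (HdV H2).
Qed.

(* Removing the edge xx' splits the tree in two: every vertex sees one end
   of the edge through the other. *)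
Lemma dV_edge_side x x' u : adj x x' ->
  dV u x' = dV u x + len x x' \/ dV u x = dV u x' + len x x'.
Proof.
move=> Hxx'; have [p Hp] := simple_path_exists u x'.
have [Hin|Hnin] := boolP (x \in u :: p).
  by left; rewrite (dV_split Hp Hin) (dV_edge Hxx').
right; have Hl : last u p = x' by case/and3P: Hp => _ /eqP.
have Hp' : sp u x (rcons p x) by apply: simple_path_rcons; rewrite ?Hl // adj_sym.
by rewrite (HdV Hp') pathlen_rcons -(HdV Hp) Hl len_sym.
Qed.

Lemma dV_triangle z y w : dV z w <= dV z y + dV y w.
Proof.
have [p Hp] := simple_path_exists y w.
elim: p y Hp => [|y1 p IH] y Hp.
  by case/and3P: Hp => _ /= /eqP -> _; rewrite dV_xx addr0.
have [H1 H2] := simple_path_cons Hp.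
have := IH _ H2; rewrite (dV_cons Hp).
by case: (dV_edge_side z H1) => ->; have := len_gt0 H1; lra.
Qed.

Lemma dV_through_edge x x' y w : adj x x' ->
  dV y x = dV y x' + len x x' -> dV w x' = dV w x + len x x' ->
  dV y w = dV y x + dV x w.
Proof.
move=> Hxx' Hy Hw; have L0 := len_gt0 Hxx'.
have [q Hq] := simple_path_exists y x'; have [r Hr] := simple_path_exists x w.
have Lq : last y q = x' by case/and3P: Hq => _ /eqP.
have Hyw : sp y w (q ++ x :: r).
  case/and3P: (Hq) => P1 _ U1; case/and3P: (Hr) => P2 /eqP L2 U2.
  apply/and3P; split.
  - by rewrite cat_path P1 /= Lq adj_sym Hxx'.
  - by rewrite last_cat /= L2.
  rewrite -cat_cons cat_uniq U1 U2 andbT; apply/hasP => -[v Hvr Hvq].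
  have E1 := dV_split Hq Hvq; have E2 := dV_split Hr Hvr.
  have T1 := dV_triangle y v x; have T2 := dV_triangle w v x'.
  have S1 := dV_sym w x; have S2 := dV_sym w v; have S3 := dV_sym x v.
  by case: (dV_edge_side v Hxx'); lra.
rewrite (HdV Hyw) pathlen_cat Lq pathlen_cons -(HdV Hq) -(HdV Hr) Hy.
by have := len_sym x x'; lra.
Qed.

(* Induction along the path from x to y: moving x across an edge either
   keeps the condition or it is forced by [dV_through_edge]. *)
Lemma dV_four_point x y z w : four_point dV x y z w.
Proof.
have [p Hp] := simple_path_exists x y.
elim: p x Hp => [|x1 p IH] x Hp.
  case/and3P: Hp => _ /= /eqP <- _; rewrite /four_point dV_xx add0r; left.
  by rewrite (dV_sym x z); apply: dV_triangle.
have [H1 H2] := simple_path_cons Hp; have L0 := len_gt0 H1.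
have Hy : dV y x = dV y x1 + len x x1 by rewrite dV_sym (dV_cons Hp) dV_sym addrC.
have := IH _ H2; rewrite /four_point => IH'.
have := dV_sym x z; have := dV_sym x w; have := dV_sym x1 z; have := dV_sym x1 w.
have := dV_sym y z; have := dV_sym y w; have := dV_sym z w; have := dV_sym x y.
have := dV_cons Hp; move=> *.
case: (dV_edge_side z H1) => Ez; case: (dV_edge_side w H1) => Ew.
- have := dV_through_edge H1 Hy Ez; have := dV_through_edge H1 Hy Ew.
  have := dV_triangle z x w; lra.
- have := dV_through_edge H1 Hy Ez; have := dV_through_edge H1 Ew Ez; lra.
- have := dV_through_edge H1 Hy Ew; have := dV_through_edge H1 Ez Ew; lra.
- by case: IH' => ?; [left|right]; lra.
Qed.

Lemma edge_crossing_eq a b c e : adj a b -> adj c e ->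
  dV c b = dV c a + len a b -> dV e a = dV e b + len a b -> a = c /\ b = e.
Proof.
move=> Hab Hce Hc He.
have L1 := len_gt0 Hab; have L2 := len_gt0 Hce; have Dce := dV_edge Hce.
have S1 := dV_sym c e; have S2 := dV_sym a c; have S3 := dV_sym a e.
have S4 := dV_sym b c; have S5 := dV_sym b e; have G1 := dV_ge0 e b.
have G2 := dV_ge0 a c; have G3 := dV_ge0 a e; have G4 := dV_ge0 b c.
have G5 := dV_ge0 b e; have Thr := dV_through_edge Hab He Hc.
have Hac : a = c.
  case: (dV_edge_side a Hce) => E; first by apply: dV_eq0; lra.
  have Eae : a = e by apply: dV_eq0; lra.
  by subst e; exfalso; move: He; rewrite dV_xx; lra.
subst c; split => //.
have Hba : adj b a by rewrite adj_sym.
have Hab' : dV a b = dV a a + len b a by rewrite dV_xx add0r dV_edge // len_sym.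
have He' : dV e a = dV e b + len b a by rewrite He len_sym.
have Thr' := dV_through_edge Hba Hab' He'.
case: (dV_edge_side b Hce) => E; last by apply: dV_eq0; lra.
have Eba : b = a by apply: dV_eq0; lra.
by move: Hab; rewrite Eba (negbTE (adj_irr a)).
Qed.

End VertexMetric.

Section MinNormCases.
Variable R : realFieldType.

Lemma min_cases (x y : R) :
  (Num.min x y = x /\ x <= y) \/ (Num.min x y = y /\ y <= x).
Proof.
by case: (lerP x y) => H; [left|right]; rewrite ?(min_idPl H) ?(min_idPr (ltW H)) ?ltW.
Qed.

Lemma norm_cases (x : R) : (`|x| = x /\ 0 <= x) \/ (`|x| = - x /\ x <= 0).
Proof.
by case: (lerP 0 x) => H; [left; rewrite ger0_norm | right; rewrite ltr0_norm ?ltW].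
Qed.

End MinNormCases.

Ltac rewrite_everywhere E t :=
  rewrite ?E; repeat match goal with H : context [t] |- _ => rewrite E in H end; clear E.

Ltac case_min_norm :=
  repeat match goal with
  | |- context [Num.min ?a ?b] => let E := fresh in
      case: (min_cases a b) => [[E ?]|[E ?]]; rewrite_everywhere E (Num.min a b)
  | H : context [Num.min ?a ?b] |- _ => let E := fresh in
      case: (min_cases a b) => [[E ?]|[E ?]]; rewrite_everywhere E (Num.min a b)
  | |- context [Num.norm ?a] => let E := fresh in
      case: (norm_cases a) => [[E ?]|[E ?]]; rewrite_everywhere E (Num.norm a)
  | H : context [Num.norm ?a] |- _ => let E := fresh in
      case: (norm_cases a) => [[E ?]|[E ?]]; rewrite_everywhere E (Num.norm a)
  end.

Lemma min4_near_end (R : realFieldType) (s L ac ae t M : R) : 0 <= s <= L ->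
  Num.min (Num.min (s + ac + t) (s + ae + (M - t)))
          (Num.min (L - s + (ac + L) + t) (L - s + (ae + L) + (M - t))) =
  s + Num.min (ac + t) (ae + (M - t)).
Proof. by case/andP=> *; case_min_norm; lra. Qed.

Lemma min4_far_end (R : realFieldType) (s L bc be t M : R) : 0 <= s <= L ->
  Num.min (Num.min (s + (bc + L) + t) (s + (be + L) + (M - t)))
          (Num.min (L - s + bc + t) (L - s + be + (M - t))) =
  (L - s) + Num.min (bc + t) (be + (M - t)).
Proof. by case/andP=> *; case_min_norm; lra. Qed.

(* The hypotheses are the conclusion at [s = 0] and at [s = L] when [py],
   [pz] and [pw] lie in [[0, L]]; the lemma holds without that assumption. *)
Lemma four_point_abs_interp (R : realFieldType) (s L py ry pz rz pw rw Dyz Dyw Dzw : R) :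
  0 <= s <= L ->
  (py + ry + Dzw <= pz + rz + Dyw \/ py + ry + Dzw <= pw + rw + Dyz) ->
  (L - py + ry + Dzw <= L - pz + rz + Dyw \/ L - py + ry + Dzw <= L - pw + rw + Dyz) ->
  `|s - py| + ry + Dzw <= `|s - pz| + rz + Dyw \/
  `|s - py| + ry + Dzw <= `|s - pw| + rw + Dyz.
Proof.
case/andP=> Hs1 Hs2 Fa Fb.
case: (lerP (`|s - py| + ry + Dzw) (`|s - pz| + rz + Dyw)) => h1; first by left.
case: (lerP (`|s - py| + ry + Dzw) (`|s - pw| + rw + Dyz)) => h2; first by right.
by exfalso; case_min_norm; case: Fa => ?; case: Fb => ?; lra.
Qed.

Section PointMetric.
Variables (R : realFieldType) (V : finType) (adj : rel V) (len : V -> V -> R)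
  (dV : V -> V -> R).
Hypothesis Htree : is_wtree adj len.
Hypothesis HdV : is_vdist adj len dV.

Local Notation d := (tdist len dV).
Local Notation vp := (vpt R).
Local Notation valid := (valid_pt adj len).

Lemma elen_sym a b : elen len a b = elen len b a.
Proof. by rewrite /elen eq_sym; case: eqP => // _; rewrite (len_sym Htree). Qed.

Lemma elen_adj a b : adj a b -> elen len a b = len a b.
Proof. by move=> /(adj_neq Htree) /negbTE Hab; rewrite /elen Hab. Qed.

Lemma elen_xx a : elen len a a = 0.
Proof. by rewrite /elen eqxx. Qed.

Lemma valid_vpt u : valid (vp u).
Proof. by right. Qed.

Lemma valid_loop_vpt x : valid x -> pa x = pb x -> x = vp (pa x).
Proof.
case: x => a b s [[/= H _]|[/= -> ->]] //= Eab.
by move: H; rewrite Eab (negbTE (adj_irr Htree b)).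
Qed.

Lemma valid_edge x : valid x -> pa x != pb x ->
  adj (pa x) (pb x) /\ 0 <= ps x <= len (pa x) (pb x).
Proof. by case=> [//|[-> _]]; rewrite eqxx. Qed.

Lemma tdist_sym x y : d x y = d y x.
Proof.
case: x => a b s; case: y => c e t; rewrite /tdist.
rewrite (eq_sym c a) (eq_sym e b) (eq_sym c b) (eq_sym e a).
case: ifP => _; first by rewrite distrC.
rewrite [(b == c) && _]andbC; case: ifP => [/andP [/eqP -> /eqP ->]|_].
  by rewrite elen_sym; congr `|_|; ring.
rewrite !(dV_sym Htree HdV c) !(dV_sym Htree HdV e) minACA.
by congr (Num.min (Num.min _ _) (Num.min _ _)); ring.
Qed.

Lemma tdist_xx x : d x x = 0.
Proof. by case: x => a b s; rewrite /tdist !eqxx /= subrr normr0. Qed.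

Lemma tdist_vpt_l u c e t : valid (Pt c e t) ->
  d (vp u) (Pt c e t) = Num.min (dV u c + t) (dV u e + (elen len c e - t)).
Proof.
move=> Vy; have Hloop : c = e -> t = 0.
  case: Vy => [[/= Hce _] Ece|[_ //]].
  by move: Hce; rewrite Ece (negbTE (adj_irr Htree e)).
rewrite /tdist /vpt /=; case: ifP => [/andP [/eqP Ec /eqP Ee]|_].
  by subst c e; rewrite Hloop // (dV_xx HdV) elen_xx !(subrr, addr0, normr0) minxx.
case: ifP => [/andP [/eqP Ee /eqP Ec]|_].
  by subst c e; rewrite Hloop // (dV_xx HdV) elen_xx !(subrr, addr0, normr0) minxx.
by rewrite elen_xx; case_min_norm; lra.
Qed.

Lemma tdist_vpt u v : d (vp u) (vp v) = dV u v.
Proof. by rewrite tdist_vpt_l ?elen_xx ?subrr ?addr0 ?minxx //; apply: valid_vpt. Qed.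

(* Seen from a point of the edge [ab], any point [y] of the tree is reached
   through a point at distance [pi] from [a] on that edge, followed by a
   path of length [rho] leaving the edge. *)
Lemma tdist_edge_proj a b s y : adj a b -> 0 <= s <= len a b -> valid y ->
  exists pi rho, [/\ d (vp a) y = pi + rho, d (vp b) y = len a b - pi + rho
                   & d (Pt a b s) y = `|s - pi| + rho].
Proof.
move=> Hab Hs; case: y => c e t Vy.
rewrite (tdist_vpt_l a Vy) (tdist_vpt_l b Vy).
have L0 := len_gt0 Htree Hab; have Dab := dV_edge Htree HdV Hab.
have Dba : dV b a = len a b by rewrite (dV_sym Htree HdV) Dab.
have Lab := elen_adj Hab; have Lba : elen len b a = len a b by rewrite elen_sym.
have [/andP [/eqP Eac /eqP Ebe]|Hsame] := boolP ((a == c) && (b == e)).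
  subst c e; have /= [_ Ht] := valid_edge Vy (adj_neq Htree Hab).
  exists t, 0; rewrite /tdist !eqxx /= Dab Dba !(dV_xx HdV) Lab addr0.
  by split => //; case/andP: Ht => *; case_min_norm; lra.
have [/andP [/eqP Eae /eqP Ebc]|Hrev] := boolP ((a == e) && (b == c)).
  have Hba : b != a by rewrite eq_sym (adj_neq Htree Hab).
  subst c e; have /= [_ Ht] := valid_edge Vy Hba; rewrite (len_sym Htree) in Ht.
  exists (len a b - t), 0; rewrite /tdist !eqxx (negbTE (adj_neq Htree Hab)) /=.
  rewrite Dab Dba !(dV_xx HdV) Lba addr0.
  by split => //; case/andP: Ht => *; case_min_norm; lra.
have Hx : d (Pt a b s) (Pt c e t) =
    Num.min (Num.min (s + dV a c + t) (s + dV a e + (elen len c e - t)))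
      (Num.min (len a b - s + dV b c + t) (len a b - s + dV b e + (elen len c e - t))).
  by rewrite /tdist (negbTE Hsame) (negbTE Hrev) Lab.
have Sa := dV_sym Htree HdV a; have Sb := dV_sym Htree HdV b.
have /andP [Hs0 HsL] := Hs.
case: (dV_edge_side Htree HdV c Hab) => Ec; case: (dV_edge_side Htree HdV e Hab) => Ee.
- exists 0, (Num.min (dV a c + t) (dV a e + (elen len c e - t))).
  rewrite Hx Sa Sb (Sa e) (Sb e) Ec Ee.
  rewrite min4_near_end // !subr0 ger0_norm // add0r; split => //.
  by rewrite addr_minr; congr (Num.min _ _); ring.
- case: Vy => [[/= Hce _]|[/= Ece _]]; last by subst e; lra.
  have [Eac Ebe] := edge_crossing_eq Htree HdV Hab Hce Ec Ee.
  by move: Hsame; rewrite Eac Ebe !eqxx.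
- case: Vy => [[/= Hce _]|[/= Ece _]]; last by subst e; lra.
  rewrite (adj_sym Htree) in Hce.
  have [Eae Ebc] := edge_crossing_eq Htree HdV Hab Hce Ee Ec.
  by move: Hrev; rewrite Eae Ebc !eqxx.
- exists (len a b), (Num.min (dV b c + t) (dV b e + (elen len c e - t))).
  rewrite Hx Sa Sb (Sa e) (Sb e) Ec Ee.
  rewrite min4_far_end // subrr add0r distrC ger0_norm ?subr_ge0 //; split => //.
  by rewrite addr_minr; congr (Num.min _ _); ring.
Qed.

End PointMetric.

Lemma abs_step_toward (R : realFieldType) (s p t : R) : 0 < t <= `|s - p| ->
  exists s', [/\ `|s - s'| = t, `|s' - p| = `|s - p| - t
             & (s <= s' <= p) || (p <= s' <= s)].
Proof.
case/andP => Ht0 Htp; have [Hsp|Hps] := ltrP s p.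
- have Ep : `|s - p| = p - s by rewrite distrC ger0_norm // subr_ge0 ltW.
  rewrite Ep in Htp *; exists (s + t).
  split; [by case_min_norm; lra | by case_min_norm; lra |].
  by apply/orP; left; apply/andP; split; lra.
- have Ep : `|s - p| = s - p by rewrite ger0_norm // subr_ge0.
  rewrite Ep in Htp *; exists (s - t).
  split; [by case_min_norm; lra | by case_min_norm; lra |].
  by apply/orP; right; apply/andP; split; lra.
Qed.

Section TreeGeometry.
Variables (R : realFieldType) (V : finType) (adj : rel V) (len : V -> V -> R)
  (dV : V -> V -> R).
Hypothesis Htree : is_wtree adj len.
Hypothesis HdV : is_vdist adj len dV.

Local Notation d := (tdist len dV).
Local Notation vp := (vpt R).
Local Notation valid := (valid_pt adj len).

Lemma four_point_swapl x y z w : four_point d y x z w -> four_point d x y z w.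
Proof. by rewrite /four_point !(tdist_sym Htree HdV y); case=> ?; [right|left]; lra. Qed.

Lemma four_point_swap_pairs x y z w : four_point d z w x y -> four_point d x y z w.
Proof.
rewrite /four_point (tdist_sym Htree HdV z x) (tdist_sym Htree HdV w y)
  (tdist_sym Htree HdV z y) (tdist_sym Htree HdV w x).
by case=> ?; [left|right]; lra.
Qed.

Lemma four_point_vpt_lift x y z w : valid x -> valid y -> valid z -> valid w ->
  (forall a, four_point d (vp a) y z w) -> four_point d x y z w.
Proof.
move=> Vx Vy Vz Vw H.
have [/eqP Heq|Hne] := boolP (pa x == pb x).
  by rewrite (valid_loop_vpt Htree Vx Heq); apply: H.
have [Hab Hs] := valid_edge Vx Hne; move: (H (pa x)) (H (pb x)).
case: x Vx Hne Hab Hs => a b s /= _ _ Hab Hs.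
have [py [ry [Ay By Xy]]] := tdist_edge_proj Htree HdV Hab Hs Vy.
have [pz [rz [Az Bz Xz]]] := tdist_edge_proj Htree HdV Hab Hs Vz.
have [pw [rw [Aw Bw Xw]]] := tdist_edge_proj Htree HdV Hab Hs Vw.
rewrite /four_point Xy Xz Xw Ay Az Aw By Bz Bw.
exact: four_point_abs_interp.
Qed.

(* Each point is moved to a vertex in turn, using the symmetries of the
   condition, which reduces it to [dV_four_point]. *)
Lemma tdist_four_point x y z w : valid x -> valid y -> valid z -> valid w ->
  four_point d x y z w.
Proof.
have Vv := valid_vpt adj len.
move=> Vx Vy Vz Vw; apply: four_point_vpt_lift => // a.
apply: four_point_swapl; apply: four_point_vpt_lift => // b.
apply: four_point_swap_pairs; apply: four_point_vpt_lift => // c.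
apply: four_point_swapl; apply: four_point_vpt_lift => // e.
rewrite /four_point !(tdist_vpt Htree HdV); exact: (dV_four_point Htree HdV).
Qed.

Lemma tdist_triangle x y z : valid x -> valid y -> valid z -> d x z <= d x y + d y z.
Proof.
move=> Vx Vy Vz; have := tdist_four_point Vx Vz Vy Vy.
by rewrite /four_point tdist_xx (tdist_sym Htree HdV z y); case; lra.
Qed.

Lemma tdist_ge0 x y : valid x -> valid y -> 0 <= d x y.
Proof.
move=> Vx Vy; have := tdist_triangle Vx Vy Vx.
by rewrite tdist_xx (tdist_sym Htree HdV y x); lra.
Qed.

Local Notation on_path := (on_path len dV).

Lemma on_path_convex c x p y : valid c -> valid x -> valid p -> valid y ->
  on_path c p x -> d c p * d x y <= (d c p - d c x) * d c y + d c x * d p y.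
Proof.
move=> Vc Vx Vp Vy; rewrite /on_path => Hx.
have T1 := tdist_triangle Vx Vc Vy; have T2 := tdist_triangle Vx Vp Vy.
have Gcx := tdist_ge0 Vc Vx; have Gxp := tdist_ge0 Vx Vp.
have S1 := tdist_sym Htree HdV x c; have S2 := tdist_sym Htree HdV y p.
have S3 := tdist_sym Htree HdV y c.
case: (tdist_four_point Vx Vy Vc Vp) => H.
- have h1 : d x y <= d p y - d x p by lra.
  have h2 : d x y <= d c x + d c y by lra.
  by have := ler_wpM2l Gcx h1; have := ler_wpM2l Gxp h2; nra.
- have h1 : d x y <= d c y - d c x by lra.
  have h2 : d x y <= d x p + d p y by lra.
  by have := ler_wpM2l Gxp h1; have := ler_wpM2l Gcx h2; nra.
Qed.

(* [d c p + d c q - d p q] is twice the length of the common part of the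
   paths from [c] to [p] and to [q]. *)
Lemma on_path_branch c x p q : valid c -> valid x -> valid p -> valid q ->
  on_path c p x -> d p q + 2 * d c x < d c p + d c q -> on_path c q x.
Proof.
rewrite /on_path => Vc Vx Vp Vq Hx Hg.
have := tdist_triangle Vc Vx Vq; have := tdist_triangle Vx Vc Vq.
have := tdist_sym Htree HdV x c; have := tdist_sym Htree HdV q p.
have := tdist_sym Htree HdV q c.
by case: (tdist_four_point Vx Vq Vc Vp); lra.
Qed.

Lemma tdist_eq0_trans c u y : valid c -> valid y ->
  d c (vp u) = 0 -> d c y = d (vp u) y.
Proof.
move=> Vc Vy H0; have Vu := valid_vpt adj len u.
have := tdist_triangle Vc Vu Vy; have := tdist_triangle Vu Vc Vy.
by rewrite (tdist_sym Htree HdV (vp u) c) H0; lra.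
Qed.

Lemma tdist_edge_vpt a b s u : adj a b -> 0 <= s <= len a b ->
  d (Pt a b s) (vp u) =
  `|s - (dV a u - dV b u + len a b) / 2| + (dV a u + dV b u - len a b) / 2.
Proof.
move=> Hab Hs.
have [pi [rho [Ha Hb ->]]] := tdist_edge_proj Htree HdV Hab Hs (valid_vpt adj len u).
rewrite !(tdist_vpt Htree HdV) in Ha Hb; rewrite Ha Hb.
by congr (`|_ - _| + _); field.
Qed.

Lemma edge_vpt_proj_end a b u : adj a b ->
  (dV a u - dV b u + len a b) / 2 = 0 \/ (dV a u - dV b u + len a b) / 2 = len a b.
Proof.
move=> Hab; rewrite (dV_sym Htree HdV a) (dV_sym Htree HdV b).
by case: (dV_edge_side Htree HdV u Hab) => ->; [left|right]; field.
Qed.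

Lemma on_path_vpt_start u v : 0 < dV u v -> exists2 e, 0 < e & forall t, 0 < t <= e ->
  exists x, [/\ valid x, d (vp u) x = t & on_path (vp u) (vp v) x].
Proof.
have [[|u1 p] Hp] := simple_path_exists Htree u v.
  by case/and3P: Hp => _ /= /eqP ->; rewrite (dV_xx HdV) ltxx.
move=> _; have [H1 _] := simple_path_cons Hp.
have H1' : adj u1 u by rewrite (adj_sym Htree).
have L0 := len_gt0 Htree H1; have Duv := dV_cons HdV Hp.
exists (len u u1) => // t /andP [Ht0 HtL].
have Ht : 0 <= t <= len u u1 by rewrite HtL ltW.
have Du : d (vp u) (Pt u u1 t) = t.
  rewrite (tdist_sym Htree HdV) tdist_edge_vpt // (dV_xx HdV) (dV_edge Htree HdV H1').
  rewrite (len_sym Htree u1 u).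
  by rewrite sub0r addNr add0r subrr mul0r subr0 addr0 gtr0_norm.
exists (Pt u u1 t); split => //; first by left.
rewrite /on_path Du tdist_edge_vpt // !(tdist_vpt Htree HdV) Duv.
have -> : (len u u1 + dV u1 v - dV u1 v + len u u1) / 2 = len u u1 by field.
have -> : (len u u1 + dV u1 v + dV u1 v - len u u1) / 2 = dV u1 v by field.
by rewrite distrC ger0_norm ?subr_ge0 //; ring.
Qed.

Lemma tdist_same_edge a b s s' : d (Pt a b s) (Pt a b s') = `|s - s'|.
Proof. by rewrite /tdist !eqxx. Qed.

Lemma on_path_edge_start a b s v : adj a b -> 0 <= s <= len a b ->
  let pi := (dV a v - dV b v + len a b) / 2 in s != pi ->
  exists2 e, 0 < e & forall t, 0 < t <= e ->
  exists x, [/\ valid x, d (Pt a b s) x = t & on_path (Pt a b s) (vp v) x].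
Proof.
move=> Hab Hs pi Hspi; have L0 := len_gt0 Htree Hab.
have Hpi : 0 <= pi <= len a b.
  by rewrite /pi; case: (edge_vpt_proj_end v Hab) => ->; apply/andP; split; lra.
exists `|s - pi|; first by rewrite normr_gt0 subr_eq0.
move=> t Ht; have [s' [Hss' Hs'pi Hbetw]] := abs_step_toward Ht.
have Hs' : 0 <= s' <= len a b.
  case/andP: (Hs) => *; case/andP: Hpi => *.
  by case/orP: Hbetw => /andP [? ?]; apply/andP; split; lra.
exists (Pt a b s'); split; [by left | by rewrite tdist_same_edge |].
by rewrite /on_path tdist_same_edge !tdist_edge_vpt // -/pi Hss' Hs'pi; ring.
Qed.

Lemma on_path_start c v : valid c -> 0 < d c (vp v) ->
  exists2 e, 0 < e & forall t, 0 < t <= e ->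
  exists x, [/\ valid x, d c x = t & on_path c (vp v) x].
Proof.
move=> Vc Hpos; have Vv := valid_vpt adj len v.
have Hvert u : d c (vp u) = 0 -> exists2 e, 0 < e & forall t, 0 < t <= e ->
    exists x, [/\ valid x, d c x = t & on_path c (vp v) x].
  move=> H0; have Htr y : valid y -> d c y = d (vp u) y.
    by move=> Vy; apply: tdist_eq0_trans.
  rewrite Htr // (tdist_vpt Htree HdV) in Hpos.
  have [e He Hx] := on_path_vpt_start Hpos; exists e => // t /Hx [x [Vx Hux Hpx]].
  by exists x; rewrite /on_path !Htr.
have [/eqP Heq|Hne] := boolP (pa c == pb c).
  by apply: (Hvert (pa c)); rewrite -(valid_loop_vpt Htree Vc Heq) tdist_xx.
case: c Vc Hne Hpos Hvert => a b s Vc Hne Hpos Hvert.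
have /= [Hab Hs] := valid_edge Vc Hne.
have [Hspi|/negPn/eqP Hspi] := boolP (s != (dV a v - dV b v + len a b) / 2).
  exact: on_path_edge_start.
have Dba : dV b a = len a b by rewrite (dV_sym Htree HdV) (dV_edge Htree HdV Hab).
case: (edge_vpt_proj_end v Hab) => Hend; rewrite Hend in Hspi; subst s.
- apply: (Hvert a); rewrite tdist_edge_vpt // (dV_xx HdV) Dba.
  by case_min_norm; lra.
- apply: (Hvert b); rewrite tdist_edge_vpt // (dV_xx HdV) (dV_edge Htree HdV Hab).
  by case_min_norm; lra.
Qed.

End TreeGeometry.

Lemma fin_pos_lbound (R : realFieldType) (I : finType) (P : pred I) (g : I -> R) :
  (forall i, P i -> 0 < g i) -> exists2 e, 0 < e & forall i, P i -> e <= g i.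
Proof.
move=> H; exists (\big[Num.min/1]_(i | P i) g i); first exact: lt_bigmin.
by move=> i Pi; apply: bigmin_le_cond.
Qed.

Section ExpectedDistance.
Variables (R : realFieldType) (V : finType) (adj : rel V) (len : V -> V -> R)
  (dV : V -> V -> R).
Hypothesis Htree : is_wtree adj len.
Hypothesis HdV : is_vdist adj len dV.
Variables (n : nat) (m : 'I_n -> nat) (w : 'I_n -> R).
(* Keeps [i] explicit in [f i j] and [loc i j], although the type of [j]
   depends on it. *)
Unset Implicit Arguments.
Variables (f : forall i, 'I_(m i) -> R) (loc : forall i, 'I_(m i) -> point R V).
Hypothesis Hw : forall i, 0 <= w i.
Hypothesis Hf : forall i j, 0 <= f i j.
Hypothesis Hf1 : forall i, \sum_(j < m i) f i j = 1.
Hypothesis Hloc : forall i j, valid_pt adj len (loc i j).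
Set Implicit Arguments.

Local Notation d := (tdist len dV).
Local Notation valid := (valid_pt adj len).
Local Notation on_path := (on_path len dV).
Local Notation E := (Ed len dV w f loc).

Lemma Ed_lipschitz x y i : valid x -> valid y -> E x i <= E y i + w i * d x y.
Proof.
move=> Vx Vy; rewrite /Ed -mulrDr ler_wpM2l //.
rewrite -[d x y]mulr1 -(Hf1 i) mulr_sumr -big_split /= ler_sum // => j _.
by have := tdist_triangle Htree HdV Vx Vy (Hloc i j); have := Hf i j; nra.
Qed.

Lemma Ed_on_path_convex c x p i : valid c -> valid x -> valid p -> on_path c p x ->
  d c p * E x i <= (d c p - d c x) * E c i + d c x * E p i.
Proof.
move=> Vc Vx Vp Hx; rewrite /Ed.
have Hsum : d c p * (\sum_(j < m i) f i j * d x (loc i j)) <=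
    (d c p - d c x) * (\sum_(j < m i) f i j * d c (loc i j)) +
    d c x * (\sum_(j < m i) f i j * d p (loc i j)).
  rewrite !mulr_sumr -big_split /= ler_sum // => j _.
  by have := on_path_convex Htree HdV Vc Vx Vp (Hloc i j) Hx; have := Hf i j; nra.
by have := ler_wpM2l (Hw i) Hsum; nra.
Qed.

Lemma Ed_on_path_lt c x p i : valid c -> valid x -> valid p -> on_path c p x ->
  0 < d c x -> E p i < E c i -> E x i < E c i.
Proof.
move=> Vc Vx Vp Hx Hcx Hpc; have Hconv := Ed_on_path_convex i Vc Vx Vp Hx.
have Hcp : d c x <= d c p.
  by move: Hx; rewrite /on_path; have := tdist_ge0 Htree HdV Vx Vp; lra.
have Hgap : 0 < E c i - E p i by lra.
have Hprod := mulr_gt0 Hcx Hgap.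
rewrite ltNge; apply/negP => Hle.
by have := ler_wpM2l (ltW (lt_le_trans Hcx Hcp)) Hle; nra.
Qed.

Lemma uniform_slack k (C : 'I_k -> point R V) lam : exists2 del, 0 < del &
  forall i j, E (C j) i < lam -> E (C j) i + w i * del < lam.
Proof.
pose g (ij : 'I_n * 'I_k) := (lam - E (C ij.2) ij.1) / (w ij.1 + 1).
have Hw1 i : 0 < w i + 1 by have := Hw i; lra.
have Hpos ij : E (C ij.2) ij.1 < lam -> 0 < g ij.
  by move=> Hij; rewrite divr_gt0 ?subr_gt0.
have [del Hdel Hg] := @fin_pos_lbound R _ (fun ij => E (C ij.2) ij.1 < lam) g Hpos.
exists del => // i j Hij; have := Hg (i, j) Hij; rewrite /g /= => Hdg.
have Hq : (lam - E (C j) i) / (w i + 1) * (w i + 1) = lam - E (C j) i.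
  by rewrite divfK // gt_eqF.
have := ler_wpM2l (Hw i) Hdg; have := Hw i; nra.
Qed.

Section CostFunction.
Variables (hn : (0 < n)%N) (k : nat) (hk : (0 < k)%N).
Local Notation cost := (kcost len dV hn w f loc hk).

Lemma kcost_served C i : exists j, E (C j) i <= cost C.
Proof.
have [/existsP [j Hj]|Hno] := boolP [exists j, E (C j) i <= cost C]; first by exists j.
have Hlt j : cost C < E (C j) i.
  by rewrite ltNge; apply: contra Hno => Hj; apply/existsP; exists j.
pose g i := \big[Num.min/E (C (Ordinal hk)) i]_(j < k) E (C j) i.
have Hmin : cost C < g i by apply: lt_bigmin => // j _.
have Hmax : g i <= cost C by rewrite /kcost /=; exact: (le_bigmax _ g).
by move: Hmin Hmax; lra.
Qed.

Lemma kcost_lt C lam : (forall i, exists j, E (C j) i < lam) -> cost C < lam.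
Proof.
move=> Hserved; rewrite /kcost /=.
have Hi i : \big[Num.min/E (C (Ordinal hk)) i]_(j < k) E (C j) i < lam.
  by have [j Hj] := Hserved i; apply: le_lt_trans Hj; apply: bigmin_le.
exact: bigmax_lt.
Qed.

End CostFunction.

Section LocalImprovement.
Variable pstar : 'I_n -> V.
Hypothesis Hpstar : forall i x, valid x -> E (vpt R (pstar i)) i <= E x i.
Variable lam : R.
Hypothesis lam_not_median : forall i, lam <> E (vpt R (pstar i)) i.
Hypothesis lam_not_crossing : forall i j c, valid c ->
  on_path (vpt R (pstar i)) (vpt R (pstar j)) c -> E c i = E c j -> lam <> E c i.

Local Notation med i := (vpt R (pstar i)).

Lemma valid_med i : valid (med i).
Proof. exact: valid_vpt. Qed.

Lemma med_lt_tight c i : valid c -> E c i = lam -> E (med i) i < lam.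
Proof.
move=> Vc Hi; rewrite lt_neqAle -{2}Hi Hpstar // andbT.
by apply/eqP => Heq; apply: (lam_not_median (esym Heq)).
Qed.

Lemma tight_med_dist_gt0 c i : valid c -> E c i = lam -> 0 < d c (med i).
Proof.
move=> Vc Hi; have L := Ed_lipschitz i Vc (valid_med i).
have M := med_lt_tight Vc Hi.
rewrite lt_neqAle (tdist_ge0 Htree HdV Vc (valid_med i)) andbT; apply/eqP => H0.
by move: L; rewrite -H0 mulr0 addr0 Hi; lra.
Qed.

Lemma tight_gap_gt0 c i0 i : valid c -> E c i0 = lam -> E c i = lam ->
  0 < d c (med i0) + d c (med i) - d (med i0) (med i).
Proof.
move=> Vc Hi0 Hi; rewrite ltNge; apply/negP => Hgap.
apply: (lam_not_crossing (j := i) Vc _ _ (esym Hi0)); last by rewrite Hi0 Hi.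
have := tdist_triangle Htree HdV (valid_med i0) Vc (valid_med i).
by rewrite /on_path (tdist_sym Htree HdV (med i0) c); lra.
Qed.

Lemma tight_improve c : valid c -> exists2 e, 0 < e & forall t, 0 < t <= e ->
  exists x, [/\ valid x, d c x <= t & forall i, E c i = lam -> E x i < lam].
Proof.
move=> Vc.
have [/existsP [i0 /eqP Hi0]|Hnone] := boolP [exists i, E c i == lam]; last first.
  exists 1 => // t /andP [Ht _]; exists c; rewrite tdist_xx ltW //.
  by split => // i Hi; move/existsP: Hnone; case; exists i; apply/eqP.
have [estart Hestart Hstart] := on_path_start Htree HdV Vc (tight_med_dist_gt0 Vc Hi0).
have [egap Hegap Hgap] := @fin_pos_lbound R _ (fun i => E c i == lam)
  (fun i => (d c (med i0) + d c (med i) - d (med i0) (med i)) / 4)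
  (fun i Hi => divr_gt0 (tight_gap_gt0 Vc Hi0 (eqP Hi)) (ltr0Sn _ 3)).
exists (Num.min estart egap) => [|t /andP [Ht0]]; first by rewrite lt_min Hestart Hegap.
rewrite le_min => /andP [Htstart Htgap].
have [x [Vx Hcx Hx0]] := Hstart t (introT andP (conj Ht0 Htstart)).
exists x; split; rewrite ?Hcx // => i Hi.
have Hxi : on_path c (med i) x.
  apply: (on_path_branch Htree HdV Vc Vx (valid_med i0) (valid_med i) Hx0).
  by rewrite Hcx; have := Hgap i (introT eqP Hi); lra.
rewrite -Hi; apply: (Ed_on_path_lt Vc Vx (valid_med i) Hxi); first by rewrite Hcx.
by rewrite Hi (med_lt_tight Vc).
Qed.

Lemma better_centers k (C : 'I_k -> point R V) : (forall j, valid (C j)) ->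
  (forall i, exists j, E (C j) i <= lam) ->
  exists C' : 'I_k -> point R V,
    (forall j, valid (C' j)) /\ forall i, exists j, E (C' j) i < lam.
Proof.
move=> VC Hserved; have [del Hdel Hslack] := uniform_slack C lam.
have Hmove j : exists x,
    [/\ valid x, d (C j) x <= del & forall i, E (C j) i = lam -> E x i < lam].
  have [e He Hx] := tight_improve (VC j).
  have [|x [Vx Hd Hi]] := Hx (Num.min del e).
    by rewrite lt_min Hdel He ge_min lexx orbT.
  by exists x; split => //; apply: (le_trans Hd); rewrite ge_min lexx.
have [C' HC'] := fin_all_exists Hmove.
exists C'; split => [j|i]; first by case: (HC' j).
have [j Hj] := Hserved i; exists j; have [VCj Hd Htight] := HC' j.
move: Hj; rewrite le_eqVlt => /orP [/eqP|Hlt]; first exact: Htight.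
have := Ed_lipschitz i VCj (VC j); rewrite (tdist_sym Htree HdV) => L.
by have := Hslack i j Hlt; have := ler_wpM2l (Hw i) Hd; lra.
Qed.

End LocalImprovement.

End ExpectedDistance.

Unset Implicit Arguments.

Theorem mainTheorem7
  (R : realFieldType) (V : finType) (adj : rel V) (len : V -> V -> R)
  (dV : V -> V -> R)
  (Htree : is_wtree adj len) (HdV : is_vdist adj len dV)
  (n : nat) (hn : (0 < n)%N) (m : 'I_n -> nat)
  (w : 'I_n -> R) (f : forall i, 'I_(m i) -> R)
  (loc : forall i, 'I_(m i) -> point R V)
  (Hw : forall i, 0 <= w i)
  (Hf : forall i j, 0 <= f i j)
  (Hf1 : forall i, \sum_(j < m i) f i j = 1)
  (Hloc : forall i j, valid_pt adj len (loc i j))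
  (pstar : 'I_n -> V)
  (Hpstar : forall i x, valid_pt adj len x ->
     Ed len dV w f loc (vpt R (pstar i)) i <= Ed len dV w f loc x i)
  (k : nat) (hk : (1 <= k)%N) (lam : R)
  (Hopt_att : exists C : 'I_k -> point R V,
     (forall j, valid_pt adj len (C j)) /\ kcost len dV hn w f loc hk C = lam)
  (Hopt_min : forall C : 'I_k -> point R V,
     (forall j, valid_pt adj len (C j)) -> lam <= kcost len dV hn w f loc hk C) :
  (exists i, lam = Ed len dV w f loc (vpt R (pstar i)) i) \/
  (exists i j (c : point R V),
     [/\ valid_pt adj len c,
         on_path len dV (vpt R (pstar i)) (vpt R (pstar j)) c,
         Ed len dV w f loc c i = Ed len dV w f loc c j
       & lam = Ed len dV w f loc c i]).
Proof.
case: (classic (exists i, lam = Ed len dV w f loc (vpt R (pstar i)) i)) => [|Hmed].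
  by left.
right; apply: NNPP => Hcross.
have [C [VC HC]] := Hopt_att.
have not_median i : lam <> Ed len dV w f loc (vpt R (pstar i)) i.
  by move=> Hi; apply: Hmed; exists i.
have not_crossing i j c : valid_pt adj len c ->
    on_path len dV (vpt R (pstar i)) (vpt R (pstar j)) c ->
    Ed len dV w f loc c i = Ed len dV w f loc c j -> lam <> Ed len dV w f loc c i.
  by move=> Vc Hc Hij Hi; apply: Hcross; exists i, j, c.
have served i : exists j, Ed len dV w f loc (C j) i <= lam.
  by rewrite -HC; apply: kcost_served.
have [C' [VC' HC']] :=
  better_centers Htree HdV Hw Hf Hf1 Hloc Hpstar not_median not_crossing VC served.
by have := Hopt_min C' VC'; have := kcost_lt hn hk HC'; lra.
Qed.
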